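(* Let $G$ and $H$ be finite, simple, connected graphs, each of order at least $4$. If $G$ is outerplanar, $P(G)=2$, and $\gamma(H)=1$, then $\gamma_P(G\,\Box\, H)=2$.
   Context: The Cartesian product $G\,\Box\,H$ has vertex set $V(G)\times V(H)$, with $(g,h)$ adjacent to $(g',h')$ iff either $g=g'$ and $hh'\in E(H)$, or $h=h'$ and $gg'\in E(G)$. A graph is outerplanar if it has a crossing-free plane embedding with all vertices on one face. $P(G)$ is the least number of vertex-disjoint induced paths covering $V(G)$. $\gamma(H)$ is the domination number. For $U\subseteq V$, $cl(U)$ is obtained by coloring $U$ black and repeatedly applying: if a black vertex has exactly one white neighbor, that neighbor becomes black. $S$ is a power dominating set if $cl(N[S])$ is the whole vertex set; $\gamma_P$ is the minimum size of a power dominating set. *)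

From mathcomp Require Import all_boot.
Set Implicit Arguments. Unset Strict Implicit. Unset Printing Implicit Defensive.

Section Graphs.
Variable T : finType.
Implicit Types (e : rel T) (S U B : {set T}).

Definition simple_graph e : Prop := symmetric e /\ irreflexive e.

Definition connected_graph e : Prop := forall x y : T, connect e x y.

Definition closed_nbhd e S : {set T} :=
  [set x | (x \in S) || [exists y in S, e y x]].

(* one round of the zero-forcing (propagation) rule, applied to all black
   vertices having exactly one white neighbour *)
Definition force_step e U : {set T} :=
  U :|: [set w | [exists v in U,
           e v w && (#|[set u | e v u & u \notin U]| == 1)]].

(* cl(U): the rule applied until stabilisation (#|T| rounds suffice) *)
Definition cl e U : {set T} := iter #|T| (force_step e) U.

Definition dominating e S : bool := closed_nbhd e S == [set: T].
Definition power_dominating e S : bool := cl e (closed_nbhd e S) == [set: T].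

Definition domination_number e : nat :=
  #|[arg min_(S < [set: T] | dominating e S) #|S|]|.
Definition power_domination_number e : nat :=
  #|[arg min_(S < [set: T] | power_dominating e S) #|S|]|.

(* B induces a path in G: its vertices can be listed as a duplicate-free
   sequence s such that two vertices of B are adjacent iff consecutive in s *)
Definition induced_path e B : bool :=
  [exists s : (#|B|).-tuple T,
    [&& uniq s, [forall x, (x \in B) == (x \in s)] &
        [forall x in s, forall y in s,
          e x y == ((index y s == (index x s).+1) ||
                    (index x s == (index y s).+1))]]].

Definition induced_path_partition e (P : {set {set T}}) : bool :=
  partition P [set: T] && [forall B in P, induced_path e B].

Definition path_cover_number e : nat :=
  #|[arg min_(P < [set [set x] | x : T] | induced_path_partition e P) #|P|]|.

(* outerplanar: drawing with all vertices on a circle (in the cyclic order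
   given by f) and edges as non-crossing chords *)
Definition outerplanar e : Prop :=
  exists f : T -> nat, injective f /\
    forall a b c d : T, e a b -> e c d -> ~ (f a < f c < f b /\ f b < f d).

End Graphs.

Definition cart_prod (T1 T2 : finType) (e1 : rel T1) (e2 : rel T2) : rel (T1 * T2) :=
  fun x y => ((x.1 == y.1) && e2 x.2 y.2) || ((x.2 == y.2) && e1 x.1 y.1).

From mathcomp Require Import all_boot zify.
Set Implicit Arguments. Unset Strict Implicit. Unset Printing Implicit Defensive.

(* Forts are the obstructions to forcing: [cl e U] is everything iff every
   fort meets [U].  A product of forts of G and H is a fort of G \Box H, and
   the projection of a fort of G \Box H is a fort of G.

   Lower bound: N[(g, h)] only contains vertices sharing a coordinate with
   (g, h), while G has a fort avoiding g (otherwise forcing from {g} would run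
   along a spanning induced path, so P(G) = 1) and H has a fort avoiding h
   (built from its dominating vertex, as |H| >= 4); their product is a fort
   missed by N[(g, h)].

   Upper bound: if every fort of G meets {a, b} and c dominates H, then
   N[{(a, c), (b, c)}] contains {a, b} x V(H), so a fort avoiding it would
   project to a fort of G avoiding a and b.  Such a pair exists when G is
   outerplanar and covered by two induced paths p_0..p_m and q_0..q_n: put the
   vertices on a circle and count chord crossings mod 2.  This parity vanishes
   for two disjoint connected sets, and a fort avoiding p_0 and q_0 yields two
   crossing rungs between the paths, which splits the ladder into two such
   sets.  So if forts avoided both {p_0, q_0} and {p_0, q_n}, the three ways of
   pairing up p_0, p_m, q_0, q_n would all give an even number of crossings,
   which is impossible for four distinct points. *)

Lemma iter_extensive_fix (T : finType) (h : {set T} -> {set T}) (U : {set T}) :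
  (forall X : {set T}, X \subset h X) -> h (iter #|T| h U) = iter #|T| h U.
Proof.
move=> ext.
have grow k : h (iter k h U) = iter k h U \/ k <= #|iter k h U|.
  elim: k => [|k [fix_k | IH]] /=; [by right | by left; rewrite !fix_k |].
  have [fix_k | nfix] := eqVneq (h (iter k h U)) (iter k h U).
    by left; rewrite !fix_k.
  by right; apply: leq_ltn_trans IH (proper_card _); rewrite properEneq eq_sym nfix ext.
have [//|full] := grow #|T|.
have -> : iter #|T| h U = [set: T] by apply/eqP; rewrite eqEcard subsetT cardsT.
by apply/eqP; rewrite eqEsubset subsetT ext.
Qed.

Lemma card_le1_sub1 (T : finType) (x0 : T) (S : {set T}) :
  #|S| <= 1 -> exists x, S \subset [set x].
Proof.
have [-> _ | [x xS] S_le1] := set_0Vmem S; first by exists x0; rewrite sub0set.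
exists x; apply/subsetP => y yS; rewrite inE; apply/eqP.
by apply: (card_le1_eqP S_le1).
Qed.

Section Forcing.
Variables (T : finType) (e : rel T).
Implicit Types (F U S : {set T}).

Definition fort F : bool :=
  (F != set0) && [forall v in ~: F, #|[set u in F | e v u]| != 1].

Lemma force_step_disjoint F U :
  fort F -> [disjoint F & U] -> [disjoint F & force_step e U].
Proof.
case/andP=> _ /forall_inP fortF FU; rewrite disjoints_subset.
apply/subsetP => x xF; rewrite !inE (disjointFr FU xF) /=.
apply/existsP => -[v /and3P [vU evx /eqP one_white]].
have vF : v \in ~: F by rewrite inE (disjointFl FU vU).
have : [set u in F | e v u] \subset [set u | e v u & u \notin U].
  by apply/subsetP => u; rewrite !inE => /andP [uF ->]; rewrite (disjointFr FU uF).
move/subset_leq_card; rewrite one_white => le1.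
have : 0 < #|[set u in F | e v u]| by apply/card_gt0P; exists x; rewrite inE xF.
by have := fortF v vF; lia.
Qed.

Lemma subset_cl U : U \subset cl e U.
Proof.
rewrite /cl; elim: #|T| => [|n IH] /=; first exact: subxx.
exact: subset_trans IH (subsetUl _ _).
Qed.

Lemma cl_setT_fort U :
  (cl e U == [set: T]) = ~~ [exists F, fort F && [disjoint F & U]].
Proof.
apply/idP/idP => [/eqP clT | /existsPn no_fort].
  apply/existsPn => F; apply/negP => /andP [fortF FU].
  have : [disjoint F & cl e U].
    by rewrite /cl; elim: #|T| => //= n IH; apply: force_step_disjoint.
  case/andP: fortF => /set0Pn [x xF] _.
  by rewrite clT => /disjointFr/(_ xF); rewrite inE.
apply: contraT => clN; case/negP: (no_fort (~: cl e U)).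
rewrite disjoint_sym disjoints_subset setCK subset_cl andbT.
apply/andP; split.
  by apply: contra clN => /eqP clC; rewrite -[cl e U]setCK clC setC0.
apply/forall_inP => v; rewrite setCK => vcl; apply/negP => /cards1P [w Nw].
have : w \in [set u in ~: cl e U | e v u] by rewrite Nw inE.
rewrite !inE => /andP [/negP wcl evw]; apply: wcl.
have <- : force_step e (cl e U) = cl e U.
  by apply: iter_extensive_fix => X; apply: subsetUl.
rewrite !inE; apply/orP; right; apply/existsP; exists v; rewrite vcl evw /=.
have -> : [set u | e v u & u \notin cl e U] = [set w].
  by rewrite -Nw; apply/setP => u; rewrite !inE andbC.
by rewrite cards1.
Qed.

Lemma fort_setC1 h : irreflexive e -> 1 < #|T| ->
  #|[set u | e h u]| != 1 -> fort [set~ h].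
Proof.
move=> eirr T_gt1 deg_h; apply/andP; split.
  by rewrite -card_gt0 cardsC1; lia.
apply/forall_inP => v; rewrite setCK inE => /eqP ->.
apply: contra deg_h => /eqP <-; apply/eqP/eq_card => u; rewrite !inE.
by case: (eqVneq u h) => [->|]; rewrite ?eirr.
Qed.

Lemma closed_nbhdS S (S' : {set T}) :
  S \subset S' -> closed_nbhd e S \subset closed_nbhd e S'.
Proof.
move=> /subsetP sub; apply/subsetP => x; rewrite !inE.
case/orP=> [/sub -> // | /existsP [y /andP [yS eyx]]].
by apply/orP; right; apply/existsP; exists y; rewrite sub.
Qed.

Lemma power_dominating_setT : power_dominating e [set: T].
Proof.
rewrite /power_dominating -subTset; apply: subset_trans (subset_cl _).
by apply/subsetP => x _; rewrite !inE.
Qed.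

End Forcing.

Section CartProd.
Variables (T1 T2 : finType) (eG : rel T1) (eH : rel T2).
Local Notation eGH := (cart_prod eG eH).

Lemma fortX (A : {set T1}) (B : {set T2}) :
  fort eG A -> fort eH B -> fort eGH (setX A B).
Proof.
case/andP=> /set0Pn [a aA] /forall_inP fortA /andP [/set0Pn [b bB] /forall_inP fortB].
apply/andP; split; first by apply/set0Pn; exists (a, b); rewrite inE aA bB.
apply/forall_inP => -[x y]; rewrite !inE /= negb_and.
have nbhdE (C : {set T1}) (D : {set T2}) :
    [set u in setX A B | eGH (x, y) u] = setX C D ->
    #|[set u in setX A B | eGH (x, y) u]| = #|C| * #|D|.
  by move=> ->; rewrite cardsX.
have [xA /= yB | xA _] := boolP (x \in A).
  rewrite (@nbhdE [set x] [set u in B | eH y u]) ?cards1 ?mul1n.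
    by apply: fortB; rewrite inE.
  apply/setP => -[x' y']; rewrite !inE /cart_prod /= [x == _]eq_sym [y == _]eq_sym.
  by case: (eqVneq x' x) => [->|_]; case: (eqVneq y' y) => [->|_];
    rewrite ?eqxx ?xA ?(negbTE yB) /= ?orbF ?andbF.
have [yB | yB] := boolP (y \in B).
  rewrite (@nbhdE [set u in A | eG x u] [set y]) ?cards1 ?muln1.
    by apply: fortA; rewrite inE.
  apply/setP => -[x' y']; rewrite !inE /cart_prod /= [x == _]eq_sym [y == _]eq_sym.
  by case: (eqVneq x' x) => [->|_]; case: (eqVneq y' y) => [->|_];
    rewrite ?eqxx ?yB ?(negbTE xA) /= ?orbF ?andbF ?andbT.
rewrite (@nbhdE set0 set0) ?cards0 //.
apply/setP => -[x' y']; rewrite !inE /cart_prod /= [x == _]eq_sym [y == _]eq_sym.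
by case: (eqVneq x' x) => [->|_]; case: (eqVneq y' y) => [->|_];
  rewrite ?(negbTE xA) ?(negbTE yB) /= ?andbF.
Qed.

Lemma fort_proj1 (F : {set T1 * T2}) :
  fort eGH F -> fort eG [set x | [exists y, (x, y) \in F]].
Proof.
case/andP=> /set0Pn [[a b] abF] /forall_inP fortF; set A := [set x | _].
apply/andP; split; first by apply/set0Pn; exists a; rewrite inE; apply/existsP; exists b.
apply/forall_inP => x; rewrite !inE negb_exists => /forallP xF.
apply/negP => /cards1P [x' NA].
have NAx'' x'' : (x'' \in A) && eG x x'' = (x'' == x').
  by rewrite -in_set1 -NA inE.
have /andP [x'A exx'] : (x' \in A) && eG x x' by rewrite NAx''.
move: x'A; rewrite inE => /existsP [y x'yF].
have /fortF : (x, y) \in ~: F by rewrite inE xF.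
apply/negP; rewrite negbK -(cards1 (x', y)); apply/eqP/eq_card => -[x'' y''].
rewrite !inE /cart_prod /= xpair_eqE.
have [<-|nx] /= := eqVneq x x''.
  have nxx' : x != x' by apply: contraNneq (xF y) => ->.
  by rewrite (negbTE (xF y'')) (negbTE nxx').
have [<-|_] /= := eqVneq y y''; last by rewrite !andbF.
rewrite andbT -NAx''; apply/andP/andP => -[x''F exx''] //.
  by split; rewrite // inE; apply/existsP; exists y.
by have /eqP -> : x'' == x' by rewrite -NAx'' x''F.
Qed.

Lemma closed_nbhd_cart_prod1 g h :
  closed_nbhd eGH [set (g, h)] \subset [set u | (u.1 == g) || (u.2 == h)].
Proof.
apply/subsetP => -[x y]; rewrite !inE xpair_eqE /=.
case/orP=> [/andP [-> _] // | /existsP [u]].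
rewrite inE => /andP [/eqP -> /orP [] /andP [/eqP /= <- _]]; by rewrite eqxx ?orbT.
Qed.

Lemma not_power_dominating_sub1 g h (S : {set T1 * T2}) A B :
  fort eG A -> g \notin A -> fort eH B -> h \notin B ->
  S \subset [set (g, h)] -> ~~ power_dominating eGH S.
Proof.
move=> fortA gA fortB hB sub; rewrite /power_dominating cl_setT_fort negbK.
apply/existsP; exists (setX A B); rewrite fortX //= disjoints_subset.
apply/subsetP => -[x y] /setXP [xA yB]; rewrite inE.
apply/negP => /(subsetP (closed_nbhdS eGH sub)) /(subsetP (closed_nbhd_cart_prod1 g h)).
rewrite inE /= => /orP [] /eqP eq_gh.
  by rewrite -eq_gh xA in gA.
by rewrite -eq_gh yB in hB.
Qed.

Lemma power_dominating_pair a b c :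
  (forall F, fort eG F -> (a \in F) || (b \in F)) -> (forall y, y != c -> eH c y) ->
  power_dominating eGH [set (a, c); (b, c)].
Proof.
move=> ab_forts c_dom; rewrite /power_dominating cl_setT_fort.
apply/existsPn => F; apply/negP => /andP [fortF disF].
have inN x y : x \in [set a; b] -> (x, y) \in closed_nbhd eGH [set (a, c); (b, c)].
  move=> xab; rewrite inE; have [-> | nyc] := eqVneq y c.
    by case/set2P: xab => ->; rewrite !inE eqxx ?orbT.
  apply/orP; right; apply/existsP; exists (x, c).
  rewrite /cart_prod /= eqxx c_dom // andbT.
  by case/set2P: xab => ->; rewrite !inE eqxx ?orbT.
have /orP [] := ab_forts _ (fort_proj1 fortF) => /[!inE] /existsP [y xyF].
  by have := inN a y (set21 a b); rewrite (disjointFr disF xyF).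
by have := inN b y (set22 a b); rewrite (disjointFr disF xyF).
Qed.

End CartProd.

Section DominatingVertex.
Variables (T : finType) (e : rel T) (c : T).
Hypotheses (eirr : irreflexive e) (c_dom : forall y, y != c -> e c y).

Lemma nbhd_dominating : [set u | e c u] = [set~ c].
Proof.
apply/setP => u; rewrite !inE.
by have [->|/c_dom ->] := eqVneq u c; rewrite ?eirr.
Qed.

Lemma fort_avoid_dominated h :
  symmetric e -> 3 < #|T| -> exists2 B, fort e B & h \notin B.
Proof.
move=> esym T_gt3.
have [deg1 | deg_h] := eqVneq #|[set u | e h u]| 1; last first.
  by exists [set~ h]; [apply: fort_setC1 => //; lia | rewrite !inE eqxx].
have hc : h != c.
  by apply: contra_eqN deg1 => /eqP ->; rewrite nbhd_dominating cardsC1; lia.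
have Nh : [set u | e h u] = [set c].
  move/eqP/cards1P: deg1 => [w Nw].
  have : c \in [set u | e h u] by rewrite inE esym c_dom.
  by rewrite Nw inE => /eqP <-.
have cardB : #|[set~ h] :\ c| = #|T| - 2.
  by have := cardsD1 c [set~ h]; rewrite cardsC1 !inE eq_sym hc; lia.
exists ([set~ h] :\ c); last by rewrite !inE eqxx andbF.
apply/andP; split; first by rewrite -card_gt0 cardB; lia.
apply/forall_inP => v; rewrite !inE negb_and !negbK => /orP [/eqP -> | /eqP ->].
  have -> : [set u in [set~ h] :\ c | e c u] = [set~ h] :\ c.
    by apply/setP => u; rewrite !inE; apply/andb_idr => /andP [/c_dom].
  by rewrite cardB; lia.
have -> : [set u in [set~ h] :\ c | e h u] = set0.
  apply/setP => u; rewrite !inE; apply/negbTE/negP => /andP [/andP [uc _] ehu].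
  have : u \in [set u | e h u] by rewrite inE.
  by rewrite Nh inE (negbTE uc).
by rewrite cards0.
Qed.

End DominatingVertex.

Section InducedSeq.
Variables (T : finType) (e : rel T).

Definition induced_seq (s : seq T) : Prop :=
  uniq s /\ {in s &, forall x y,
    e x y = (index y s == (index x s).+1) || (index x s == (index y s).+1)}.

Lemma induced_pathP (B : {set T}) :
  reflect (exists2 s, induced_seq s & B =i s) (induced_path e B).
Proof.
apply: (iffP existsP) => [[t /and3P [ut /forallP Bt /forall_inP adj]] | [s [us adj] Bs]].
  exists t => [|x]; last exact/eqP/Bt.
  by split=> // x y xt yt; apply/eqP; apply: (forall_inP (adj x xt) y yt).
have size_s : size s == #|B|.
  by rewrite -(card_uniqP us); apply/eqP/eq_card => x; rewrite Bs.
exists (Tuple size_s); rewrite /= us /=; apply/andP; split.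
  by apply/forallP => x; rewrite Bs.
by apply/forall_inP => x xs; apply/forall_inP => y ys; rewrite adj.
Qed.

Lemma induced_seq_nth x0 s i j : induced_seq s -> i < size s -> j < size s ->
  e (nth x0 s i) (nth x0 s j) = (j == i.+1) || (i == j.+1).
Proof. by case=> us adj ltis ltjs; rewrite adj ?mem_nth // !index_uniq. Qed.

Lemma induced_seq_of_nth x0 s : uniq s ->
  (forall i j, i < size s -> j < size s ->
     e (nth x0 s i) (nth x0 s j) = (j == i.+1) || (i == j.+1)) ->
  induced_seq s.
Proof.
move=> us adj; split=> // x y xs ys.
by have := adj (index x s) (index y s); rewrite !nth_index // !index_mem; apply.
Qed.

Lemma induced_seq_rev s : induced_seq s -> induced_seq (rev s).
Proof.
case: s => [|x0 s] ind; first by split.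
apply: (@induced_seq_of_nth x0); first by rewrite rev_uniq; case: ind.
move=> i j; rewrite size_rev /= => ltis ltjs.
by rewrite !nth_rev // induced_seq_nth //=; lia.
Qed.

Lemma induced_seq_rcons x0 s w : symmetric e -> irreflexive e ->
  induced_seq (x0 :: s) -> w \notin x0 :: s ->
  {in x0 :: s, forall x, e x w = (x == last x0 s)} -> induced_seq (x0 :: rcons s w).
Proof.
move=> esym eirr [us adj] wN ew; set t := x0 :: s in us adj wN ew *.
have idx x : x \in t -> index x (x0 :: rcons s w) = index x t.
  by rewrite -rcons_cons -cats1 index_cat => ->.
have idxw : index w (x0 :: rcons s w) = (size s).+1.
  by rewrite -rcons_cons -cats1 index_cat (negbTE wN) /= eqxx addn0.
have ew_idx x : x \in t -> e x w = (index x t == size s).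
  by move=> xt; rewrite ew // -(index_last us) (inj_in_eq (@index_inj _ x0 t)) ?mem_last.
split; first by rewrite -rcons_cons rcons_uniq wN.
move=> x y; rewrite -rcons_cons !mem_rcons => /predU1P [-> | xt] /predU1P [-> | yt].
- by rewrite eirr idxw; lia.
- have : index y t <= size s by rewrite -ltnS index_mem.
  by rewrite esym ew_idx // idxw idx //; lia.
- have : index x t <= size s by rewrite -ltnS index_mem.
  by rewrite ew_idx // idxw idx //; lia.
- by rewrite !idx // adj.
Qed.

Definition edge_in (A : {set T}) : rel T := [rel x y | [&& e x y, x \in A & y \in A]].

Lemma edge_in_sym A : symmetric e -> symmetric (edge_in A).
Proof. by move=> esym x y; rewrite /edge_in /= esym [(x \in A) && _]andbC. Qed.

Lemma induced_seq_connect x0 (A : {set T}) s i k : induced_seq s -> i <= k < size s ->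
  (forall t, i <= t <= k -> nth x0 s t \in A) ->
  connect (edge_in A) (nth x0 s i) (nth x0 s k).
Proof.
move=> ind; elim: k => [|k IH] /andP [ik ks] inA; first by have -> : i = 0 by lia.
have [<- | ik'] := eqVneq i k.+1; first exact: connect0.
apply: connect_trans (IH _ _) (connect1 _); first by lia.
  by move=> t tk; apply: inA; lia.
by rewrite /edge_in /= induced_seq_nth ?eqxx ?inA //; lia.
Qed.

End InducedSeq.

Section ForcingChain.
Variables (T : finType) (e : rel T) (g : T).
Hypotheses (esym : symmetric e) (eirr : irreflexive e).
Hypothesis g_in_forts : forall F, fort e F -> g \in F.

(* [g :: s] lists the vertices forced from {g}, in order. *)
Definition forcing_chain (s : seq T) : Prop :=
  induced_seq e (g :: s) /\
  {in g :: s, forall x y, x != last g s -> e x y -> y \in g :: s}.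

Lemma forcing_chain_nil : forcing_chain [::].
Proof.
split=> [|x]; last by rewrite inE => /eqP -> y; rewrite eqxx.
by split=> // x y; rewrite !inE => /eqP -> /eqP ->; rewrite eirr /= eqxx.
Qed.

Lemma forcing_chain_rcons s w0 : forcing_chain s -> w0 \notin g :: s ->
  exists w, forcing_chain (rcons s w).
Proof.
move=> [ind closed] w0N; set F := ~: [set x in g :: s].
have : ~~ fort e F by apply/negP => /g_in_forts; rewrite !inE eqxx.
rewrite /fort (_ : F != set0) /=; last by apply/set0Pn; exists w0; rewrite !inE.
case/forall_inPn => v; rewrite setCK in_set => vs /negPn /cards1P [w Nw].
have : w \in [set u in F | e v u] by rewrite Nw set11.
rewrite !(in_setC, in_set) => /andP [wN evw].
have /eqP vl : v == last g s by apply: contraNT wN => nl; apply: closed _ vs _ nl evw.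
exists w; split.
  apply: induced_seq_rcons => // x xs.
  have [-> | nl] := eqVneq x (last g s); first by rewrite -vl evw.
  by apply/negbTE; apply: contra wN; apply: closed _ xs _ nl.
move=> x; rewrite -rcons_cons !mem_rcons last_rcons => /predU1P [-> | xs] y.
  by rewrite eqxx.
move=> _ exy; rewrite mem_rcons in_cons.
have [_ | yN] := boolP (y \in g :: s); rewrite ?orbT ?orbF //.
have [xl | nl] := eqVneq x (last g s); last first.
  by have := closed x xs y nl exy; rewrite (negbTE yN).
have : y \in [set u in F | e v u] by rewrite !(in_setC, in_set) yN vl -xl exy.
by rewrite Nw in_set1.
Qed.

Lemma forcing_chain_spanning : exists2 s, induced_seq e s & forall x, x \in s.
Proof.
suff grow n s : forcing_chain s -> #|T| - size s <= n ->
    exists2 s, induced_seq e s & forall x, x \in s.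
  by apply: (grow #|T| [::] forcing_chain_nil); rewrite subn0.
elim: n s => [|n IH] s chain bound.
  exfalso; have := max_card (mem (g :: s)).
  by rewrite (card_uniqP chain.1.1) [size _]/=; lia.
have [all_in | /forallPn [w0 w0N]] := boolP [forall x, x \in g :: s].
  by exists (g :: s); [case: chain | move=> x; apply: (forallP all_in)].
have [w chain'] := forcing_chain_rcons chain w0N.
by apply: IH chain' _; rewrite size_rcons; lia.
Qed.

End ForcingChain.

Section PathCover.
Variables (T : finType) (e : rel T).
Hypothesis eirr : irreflexive e.

Lemma induced_path1 x : induced_path e [set x].
Proof.
apply/induced_pathP; exists [:: x] => [|y]; last by rewrite !inE.
by split=> // y z; rewrite !inE => /eqP -> /eqP ->; rewrite eirr /= eqxx.
Qed.

Lemma singleton_path_partition : induced_path_partition e [set [set x] | x : T].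
Proof.
apply/andP; split; last by apply/forall_inP => _ /imsetP [x _ ->]; apply: induced_path1.
apply/and3P; split.
- rewrite cover_imset; apply/eqP/setP => x; rewrite inE.
  by apply/bigcupP; exists x; rewrite ?inE.
- apply/trivIsetP => _ _ /imsetP [x _ ->] /imsetP [y _ ->] nxy.
  by rewrite disjoints1 inE; apply: contraNneq nxy => ->.
- by apply/imsetP => -[x _ /setP /(_ x)]; rewrite !inE eqxx.
Qed.

Lemma path_cover_number_min P :
  induced_path_partition e P -> path_cover_number e <= #|P|.
Proof.
move=> partP; rewrite /path_cover_number.
by case: arg_minnP => [|Q _ minQ]; [apply: singleton_path_partition | apply: minQ].
Qed.

Lemma path_cover_numberP :
  exists2 P, induced_path_partition e P & #|P| = path_cover_number e.
Proof.
rewrite /path_cover_number.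
by case: arg_minnP => [|P partP _]; [apply: singleton_path_partition | exists P].
Qed.

Lemma path_cover_number_le1 (x0 : T) :
  induced_path e [set: T] -> path_cover_number e <= 1.
Proof.
move=> pathT; rewrite -(cards1 [set: T]); apply: path_cover_number_min.
rewrite /induced_path_partition /partition cover1 trivIset1 eqxx /=.
apply/andP; split; last by apply/forall_inP => _ /set1P ->.
by rewrite inE eq_sym; apply/set0Pn; exists x0.
Qed.

Lemma path_cover2_seqs : path_cover_number e = 2 ->
  exists sP sQ, [/\ induced_seq e sP, induced_seq e sQ,
    forall z, z \in sP -> z \notin sQ & forall z, (z \in sP) || (z \in sQ)].
Proof.
move=> pc2; have [P /andP [partP /forall_inP paths] /eqP] := path_cover_numberP.
rewrite pc2 => /cards2P [B [C [nBC defP]]].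
have /induced_pathP [sP indP BsP] : induced_path e B by apply: paths; rewrite defP set21.
have /induced_pathP [sQ indQ CsQ] : induced_path e C by apply: paths; rewrite defP set22.
have disBC : [disjoint B & C].
  by apply: (trivIsetP (partition_trivIset partP)); rewrite ?defP ?set21 ?set22.
exists sP, sQ; split=> // z; rewrite -BsP -CsQ.
  by move=> zB; rewrite (disjointFr disBC zB).
have : z \in cover P by rewrite (cover_partition partP) inE.
by case/bigcupP => D; rewrite defP => /set2P [] -> ->; rewrite ?orbT.
Qed.

Lemma path_cover2_fort_avoid g : symmetric e -> path_cover_number e = 2 ->
  exists2 A, fort e A & g \notin A.
Proof.
move=> esym pc2.
have [/existsP [A /andP [fortA gA]] | /existsPn none] :=
  boolP [exists A, fort e A && (g \notin A)]; first by exists A.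
have g_in_forts F : fort e F -> g \in F.
  by move=> fortF; have := none F; rewrite fortF negbK.
have [s inds all_s] := forcing_chain_spanning esym eirr g_in_forts.
have : path_cover_number e <= 1.
  apply: (path_cover_number_le1 g); apply/induced_pathP.
  by exists s => // x; rewrite inE all_s.
by rewrite pc2.
Qed.

End PathCover.

Section Crossing.
Variables (T : finType) (f : T -> nat).
Hypothesis finj : injective f.

(* With the vertices placed on a circle in the order given by [f], this is
   [true] iff the chords [a a'] and [b b'] cross, when the four points are
   distinct; in general it is additive in each chord, hence a parity of
   crossings between polygonal paths. *)
Definition crossing a a' b b' : bool :=
  (f a < f b) (+) (f a' < f b) (+) (f a < f b') (+) (f a' < f b').

Lemma crossing_transl a x a' b b' :
  crossing a x b b' (+) crossing x a' b b' = crossing a a' b b'.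
Proof.
rewrite /crossing; case: (f a < f b); case: (f x < f b); case: (f a' < f b);
  by case: (f a < f b'); case: (f x < f b'); case: (f a' < f b').
Qed.

Lemma crossing_transr a a' b x b' :
  crossing a a' b x (+) crossing a a' x b' = crossing a a' b b'.
Proof.
rewrite /crossing; case: (f a < f b); case: (f a < f x); case: (f a < f b');
  by case: (f a' < f b); case: (f a' < f x); case: (f a' < f b').
Qed.

Lemma crossing_refll a b b' : crossing a a b b' = false.
Proof. by rewrite /crossing; case: (f a < f b); case: (f a < f b'). Qed.

Lemma crossing_reflr a a' b : crossing a a' b b = false.
Proof. by rewrite /crossing; case: (f a < f b); case: (f a' < f b). Qed.

Lemma crossingCl a a' b b' : crossing a a' b b' = crossing a' a b b'.
Proof.
rewrite /crossing; case: (f a < f b); case: (f a' < f b);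
  by case: (f a < f b'); case: (f a' < f b').
Qed.

Lemma crossingCr a a' b b' : crossing a a' b b' = crossing a a' b' b.
Proof.
rewrite /crossing; case: (f a < f b); case: (f a' < f b);
  by case: (f a < f b'); case: (f a' < f b').
Qed.

Lemma crossing_four a b c d : b != c -> b != d -> c != d ->
  crossing a b c d (+) crossing a c b d (+) crossing a d b c.
Proof.
rewrite -!(inj_eq finj) /crossing => bc bd cd.
have ltNgt x y : f x != f y -> (f y < f x) = ~~ (f x < f y).
  by move=> neq; rewrite ltnNge leq_eqVlt (negbTE neq).
rewrite (ltNgt _ _ bc) (ltNgt _ _ bd) (ltNgt _ _ cd).
case: (f a < f b); case: (f a < f c); case: (f a < f d);
  by case: (f b < f c); case: (f b < f d); case: (f c < f d).
Qed.

Variable e : rel T.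
Hypotheses (esym : symmetric e) (eirr : irreflexive e).
Hypothesis noncrossing :
  forall a b c d, e a b -> e c d -> ~ (f a < f c < f b /\ f b < f d).

Lemma crossing_edges u v w w' : e u v -> e w w' ->
  u != w -> u != w' -> v != w -> v != w' -> crossing u v w w' = false.
Proof.
wlog ltuv : u v / f u < f v => [gen euv | ].
  have [ltuv | ltvu | /finj eq_uv] := ltngtP (f u) (f v); first exact: gen.
    by move=> *; rewrite crossingCl; apply: gen; rewrite // 1?esym.
  by rewrite eq_uv eirr in euv.
wlog ltww' : w w' / f w < f w' => [gen euv eww' | euv eww'].
  have [ltww' | ltw'w | /finj eq_ww'] := ltngtP (f w) (f w'); first exact: gen.
    by move=> *; rewrite crossingCr; apply: gen; rewrite // 1?esym.
  by rewrite eq_ww' eirr in eww'.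
rewrite -!(inj_eq finj) /crossing => uw uw' vw vw'.
have := noncrossing euv eww'; have := noncrossing eww' euv.
case: (ltnP (f u) (f w)); case: (ltnP (f v) (f w));
  case: (ltnP (f u) (f w')); case: (ltnP (f v) (f w')) => //= *; exfalso; lia.
Qed.

Lemma crossing_connect A a a' b b' :
  connect (edge_in e A) a a' -> connect (edge_in e (~: A)) b b' ->
  crossing a a' b b' = false.
Proof.
have neq x y : x \in A -> y \in ~: A -> x != y.
  by move=> xA; rewrite inE; apply: contraNneq => <-.
have edge_connect u v : e u v -> u \in A -> v \in A ->
    connect (edge_in e (~: A)) b b' -> crossing u v b b' = false.
  move=> euv uA vA /connectP [p]; elim: p b => [|w p IH] c /= pth eq_b'.
    by rewrite eq_b' crossing_reflr.
  case/andP: pth => /and3P [ecw cA wA] pth.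
  rewrite -(crossing_transr u v c w) (IH w pth eq_b') (crossing_edges euv ecw) //;
    by rewrite neq.
move=> /connectP [p]; elim: p a => [|x p IH] c /= pth eq_a' conn_b.
  by rewrite eq_a' crossing_refll.
case/andP: pth => /and3P [ecx cA xA] pth.
by rewrite -(crossing_transl c x) (IH x pth eq_a' conn_b) edge_connect.
Qed.

End Crossing.

Section TwoPaths.
Variables (T : finType) (e : rel T) (x0 : T).
Hypothesis esym : symmetric e.

(* If p_j is the first vertex of [s1] in [F], then p_(j-1) has a second
   neighbour in [F], which cannot lie on [s1]. *)
Lemma fort_entry (s1 s2 : seq T) (F : {set T}) z :
  induced_seq e s1 -> (forall x, (x \in s1) || (x \in s2)) -> fort e F ->
  nth x0 s1 0 \notin F -> z \in s1 -> z \in F ->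
  exists i, (forall k, k < size s1 -> nth x0 s1 k \in F -> i < k) /\
            exists2 y, (y \in s2) && (y \in F) & e (nth x0 s1 i) y.
Proof.
move=> ind cover /andP [_ /forall_inP fortF] s10F zs1 zF.
have hasF : has (mem F) s1 by apply/hasP; exists z.
set j := find (mem F) s1.
have js : j < size s1 by rewrite -has_find.
have sjF : nth x0 s1 j \in F := nth_find x0 hasF.
have j_gt0 : 0 < j by rewrite lt0n; apply: contraNneq s10F => j0; rewrite -j0.
have outF t : t < j -> nth x0 s1 t \notin F by move/(before_find x0) => /negbT.
exists j.-1; split.
  move=> k ks skF; have : j <= k by rewrite leqNgt; apply: contraL skF; apply: outF.
  by lia.
set v := nth x0 s1 j.-1; set N := [set u in F | e v u].
have vF : v \in ~: F by rewrite inE outF //; lia.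
have sjN : nth x0 s1 j \in N by rewrite inE sjF induced_seq_nth //; lia.
have : 0 < #|N :\ nth x0 s1 j|.
  by move: (fortF v vF) (cardsD1 (nth x0 s1 j) N); rewrite -/N sjN add1n; lia.
case/card_gt0P => y; rewrite !inE => /and3P [ny yF evy].
exists y; rewrite // yF andbT.
have /orP [ys1 | //] := cover y; exfalso.
move: evy ny yF; rewrite -(nth_index x0 ys1) /v.
rewrite induced_seq_nth ?index_mem //; last by lia.
case/orP => /eqP idx_y; last by rewrite (negbTE (outF _ _)) //; lia.
by rewrite idx_y prednK // eqxx.
Qed.

Lemma fort_rungs (sP sQ : seq T) (F : {set T}) :
  induced_seq e sP -> induced_seq e sQ -> (forall z, (z \in sP) || (z \in sQ)) ->
  fort e F -> nth x0 sP 0 \notin F -> nth x0 sQ 0 \notin F ->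
  exists i k j l, [/\ i < k < size sP, j < l < size sQ,
    e (nth x0 sP i) (nth x0 sQ l) & e (nth x0 sP k) (nth x0 sQ j)].
Proof.
move=> indP indQ cover fortF p0F q0F.
have coverQP z : (z \in sQ) || (z \in sP) by rewrite orbC.
have entryP := fort_entry indP cover fortF p0F.
have entryQ := fort_entry indQ coverQP fortF q0F.
have [z0 z0F] : exists z0, z0 \in F by case/andP: fortF => /set0Pn.
have [zP zPP zPF] : exists2 z, z \in sP & z \in F.
  have /orP [z0P | z0Q] := cover z0; first by exists z0.
  by have [_ [_ [w /andP [wP wF] _]]] := entryQ _ z0Q z0F; exists w.
have [zQ zQQ zQF] : exists2 z, z \in sQ & z \in F.
  have /orP [z0P | z0Q] := cover z0; last by exists z0.
  by have [_ [_ [w /andP [wQ wF] _]]] := entryP _ z0P z0F; exists w.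
have [i [iF [z /andP [zQ' zF] eiz]]] := entryP _ zPP zPF.
have [j [jF [w /andP [wP wF] ejw]]] := entryQ _ zQQ zQF.
exists i, (index w sP), j, (index z sQ); rewrite !nth_index //; split=> //.
  by rewrite index_mem wP andbT iF ?index_mem ?nth_index.
  by rewrite index_mem zQ' andbT jF ?index_mem ?nth_index.
by rewrite esym.
Qed.

Variable f : T -> nat.
Hypotheses (finj : injective f) (eirr : irreflexive e).
Hypothesis noncrossing :
  forall a b c d, e a b -> e c d -> ~ (f a < f c < f b /\ f b < f d).

Lemma crossing_rungs (sP sQ : seq T) i k j l :
  induced_seq e sP -> induced_seq e sQ -> (forall z, z \in sP -> z \notin sQ) ->
  i < k < size sP -> j < l < size sQ ->
  e (nth x0 sP i) (nth x0 sQ l) -> e (nth x0 sP k) (nth x0 sQ j) ->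
  crossing f (nth x0 sP 0) (nth x0 sQ (size sQ).-1) (nth x0 sP (size sP).-1) (nth x0 sQ 0)
    = false.
Proof.
move=> indP indQ disPQ /andP [ik ks] /andP [jl ls] eil ekj.
pose A := [set z | (z \in sP) && (index z sP <= i) || (z \in sQ) && (l <= index z sQ)].
have inAP t : t < size sP -> (nth x0 sP t \in A) = (t <= i).
  move=> ts; rewrite inE mem_nth // (negbTE (disPQ _ (mem_nth _ ts))).
  by rewrite index_uniq ?orbF //; case: indP.
have inAQ t : t < size sQ -> (nth x0 sQ t \in A) = (l <= t).
  move=> ts; have : nth x0 sQ t \notin sP by apply: contraL (mem_nth x0 ts); apply: disPQ.
  by rewrite inE mem_nth // index_uniq //; [move/negbTE ->| case: indQ].
have connCA := sym_connect_sym (edge_in_sym (~: A) esym).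
(* p_0 .. p_i, q_l .. q_n runs inside [A], and p_m .. p_k, q_j .. q_0 outside. *)
apply: (crossing_connect finj esym eirr noncrossing (A := A)).
  apply: (@connect_trans _ _ (nth x0 sP i)).
    apply: induced_seq_connect => //;
      by [lia | move=> t /andP [_ ti]; rewrite inAP //; lia].
  apply: (@connect_trans _ _ (nth x0 sQ l)).
    by apply: connect1; rewrite /edge_in /= eil inAP ?inAQ //; lia.
  apply: induced_seq_connect => //;
    by [lia | move=> t /andP [lt tn]; rewrite inAQ //; lia].
apply: (@connect_trans _ _ (nth x0 sP k)).
  rewrite connCA; apply: induced_seq_connect => //;
    by [lia | move=> t /andP [kt tm]; rewrite in_setC inAP //; lia].
apply: (@connect_trans _ _ (nth x0 sQ j)).
  by apply: connect1; rewrite /edge_in /= ekj !in_setC inAP ?inAQ //; lia.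
rewrite connCA; apply: induced_seq_connect => //;
  by [lia | move=> t /andP [_ tj]; rewrite in_setC inAQ //; lia].
Qed.

Lemma crossing_disjoint_paths (sP sQ : seq T) :
  induced_seq e sP -> induced_seq e sQ -> (forall z, z \in sP -> z \notin sQ) ->
  0 < size sP -> 0 < size sQ ->
  crossing f (nth x0 sP 0) (nth x0 sP (size sP).-1) (nth x0 sQ 0) (nth x0 sQ (size sQ).-1)
    = false.
Proof.
move=> indP indQ disPQ sP_gt0 sQ_gt0.
apply: (crossing_connect finj esym eirr noncrossing (A := [set z in sP])).
  apply: induced_seq_connect => // [|t /andP [_ tm]]; first lia.
  have ts : t < size sP by lia.
  by rewrite inE mem_nth.
apply: induced_seq_connect => // [|t /andP [_ tn]]; first lia.
have ts : t < size sQ by lia.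
by rewrite !inE; apply: contraL (mem_nth x0 ts) => /disPQ.
Qed.

Lemma two_paths_forcing_pair (sP sQ : seq T) :
  induced_seq e sP -> induced_seq e sQ ->
  (forall z, z \in sP -> z \notin sQ) -> (forall z, (z \in sP) || (z \in sQ)) ->
  exists a b, forall F, fort e F -> (a \in F) || (b \in F).
Proof.
move=> indP indQ disPQ cover.
set p0 := nth x0 sP 0; set q0 := nth x0 sQ 0.
set pm := nth x0 sP (size sP).-1; set qn := nth x0 sQ (size sQ).-1.
have [/existsP [F1 /and3P [fort1 p0F1 q0F1]] | /existsPn none] :=
  boolP [exists F, [&& fort e F, p0 \notin F & q0 \notin F]]; last first.
  by exists p0, q0 => F fortF; have := none F; rewrite fortF /= negb_and !negbK.
exists p0, qn => F2 fort2; apply: contraT; rewrite negb_or => /andP [p0F2 qnF2].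
have [i [k [j [l [/andP [ik ks] /andP [jl ls] eil ekj]]]]] :=
  fort_rungs indP indQ cover fort1 p0F1 q0F1.
have sP_gt0 : 0 < size sP by lia.
have sQ_gt1 : 1 < size sQ by lia.
have sQ_gt0 : 0 < size sQ := ltnW sQ_gt1.
have pmP : pm \in sP by rewrite mem_nth // ltn_predL.
have q0qn : q0 != qn.
  rewrite nth_uniq ?ltn_predL //; last by case: indQ.
  by rewrite eq_sym -lt0n ltn_predRL.
have pmQ z : z \in sQ -> pm != z.
  by move=> zQ; apply: contraTneq pmP => ->; apply: contraL zQ; apply: disPQ.
have pmq0 : pm != q0 by apply/pmQ/mem_nth.
have pmqn : pm != qn by apply/pmQ/mem_nth; rewrite ltn_predL.
have revQ0 : nth x0 (rev sQ) 0 = qn by rewrite nth_rev ?subn1.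
have revQn : nth x0 (rev sQ) (size (rev sQ)).-1 = q0.
  by rewrite size_rev nth_rev ?ltn_predL // prednK ?subnn.
have disPQ' z : z \in sP -> z \notin rev sQ by rewrite mem_rev; apply: disPQ.
have cover' z : (z \in sP) || (z \in rev sQ) by rewrite mem_rev.
have revQ0F2 : nth x0 (rev sQ) 0 \notin F2 by rewrite revQ0.
have [i' [k' [j' [l' [ikP' jlQ' eil' ekj']]]]] :=
  fort_rungs indP (induced_seq_rev indQ) cover' fort2 p0F2 revQ0F2.
have X1 : crossing f p0 qn pm q0 = false.
  by apply: (crossing_rungs indP indQ disPQ _ _ eil ekj); rewrite ?ik ?jl.
have X2 : crossing f p0 q0 pm qn = false.
  rewrite -revQ0 -revQn.
  by apply: (crossing_rungs indP (induced_seq_rev indQ) disPQ' ikP' jlQ' eil' ekj').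
have X3 : crossing f p0 pm q0 qn = false by apply: crossing_disjoint_paths.
by have := @crossing_four _ f finj p0 _ _ _ pmq0 pmqn q0qn; rewrite X1 X2 X3.
Qed.

End TwoPaths.

Lemma arg_min_card_eq (T : finType) (P : pred {set T}) (S : {set T}) n :
  P [set: T] -> P S -> #|S| <= n -> (forall S', P S' -> n <= #|S'|) ->
  #|[arg min_(S' < [set: T] | P S') #|S'|]| = n.
Proof.
move=> PT PS Sn lb; case: arg_minnP => // M PM minM.
by apply/eqP; rewrite eqn_leq lb // (leq_trans (minM _ PS) Sn).
Qed.

Lemma domination_number1 (T : finType) (e : rel T) :
  domination_number e = 1 -> exists c, forall y, y != c -> e c y.
Proof.
rewrite /domination_number; case: arg_minnP => [|S domS _ /eqP /cards1P [c defS]].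
  by apply/eqP/setP => x; rewrite !inE.
exists c => y nyc; move/eqP/setP/(_ y): domS; rewrite defS !inE (negbTE nyc) /=.
by case/existsP => z /andP [/set1P ->].
Qed.

Theorem mainTheorem10 (T1 T2 : finType) (eG : rel T1) (eH : rel T2) :
  simple_graph eG -> connected_graph eG -> 4 <= #|T1| ->
  simple_graph eH -> connected_graph eH -> 4 <= #|T2| ->
  outerplanar eG -> path_cover_number eG = 2 -> domination_number eH = 1 ->
  power_domination_number (cart_prod eG eH) = 2.
Proof.
move=> [symG irrG] _ leG [symH irrH] _ leH [f [finj noncross]] pcG domH.
have [g0 _] : exists g0 : T1, g0 \in T1 by apply/card_gt0P; apply: leq_trans leG.
have [h0 _] : exists h0 : T2, h0 \in T2 by apply/card_gt0P; apply: leq_trans leH.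
have [c c_dom] := domination_number1 domH.
have [sP [sQ [indP indQ disPQ coverPQ]]] := path_cover2_seqs irrG pcG.
have [a [b ab_forts]] :=
  two_paths_forcing_pair g0 symG finj irrG noncross indP indQ disPQ coverPQ.
apply: (arg_min_card_eq (S := [set (a, c); (b, c)])).
- exact: power_dominating_setT.
- exact: power_dominating_pair.
- by rewrite cards2; case: (_ != _).
move=> S pdS; rewrite leqNgt; apply: contraL pdS => /(card_le1_sub1 (g0, h0)) [[g h] sub].
have [A fortA gA] := path_cover2_fort_avoid irrG g symG pcG.
have [B fortB hB] := fort_avoid_dominated irrH c_dom h symH leH.
exact: not_power_dominating_sub1 fortA gA fortB hB sub.
Qed.
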